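(* (1) If $L_1,L_2\in\mathbb{L}^{>0}(\mathrm{QBA}|\mathrm{ND})$ (over the same alphabet $\Sigma$), then $L_1\cup L_2\in\mathbb{L}^{>0}(\mathrm{QBA}|\mathrm{ND})$. (2) Let $\lambda\in(0,1)$. If $L_1,L_2\in\mathbb{L}^{>\lambda}(\mathrm{QBA}|\mathrm{ND})$ (over the same alphabet), then there is a sequence of $\omega$-languages $L^{(k)}\in\mathbb{L}^{>\lambda}(\mathrm{QBA}|\mathrm{ND})$, $k\in\mathbb{N}$, with $\lim_{k\to\infty}L^{(k)}=L_1\cup L_2$. (3) For $\lambda\in(0,1)$, $\mathbb{L}^{>\lambda}(\mathrm{QBA}|\mathrm{ND})$ is not closed in the limit: there is a sequence of languages in $\mathbb{L}^{>\lambda}(\mathrm{QBA}|\mathrm{ND})$ whose limit exists and does not belong to $\mathbb{L}^{>\lambda}(\mathrm{QBA}|\mathrm{ND})$. (4) For $\lambda\in[0,1)$, $\mathbb{L}^{>\lambda}(\mathrm{QBA}|\mathrm{ND})$ is not closed under complementation (relative to $\Sigma^\omega$). (5) For $\lambda\in[0,1)$, $\mathbb{L}^{>\lambda}(\mathrm{QBA}|\mathrm{ND})$ is not closed under intersection.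
   Context: A quantum automaton is a tuple $\mathcal{A}=(\mathcal{H},|s_0\rangle,\Sigma,\{U_\sigma:\sigma\in\Sigma\},F)$ where $\mathcal{H}$ is a finite-dimensional complex Hilbert space, $|s_0\rangle$ a unit vector, $\Sigma$ a finite alphabet, each $U_\sigma$ unitary, and $F$ a subspace. For $w=\sigma_1\sigma_2\cdots\in\Sigma^\omega$ the non-disturbing run is $|s_n\rangle=U_{\sigma_n}\cdots U_{\sigma_1}|s_0\rangle$, and $f^{\mathrm{ND}}_{\mathcal{A}}(w)=\sup_{|\psi\rangle}\sup_{\{n_i\}}\inf_{i\ge1}|\langle\psi|s_{n_i}\rangle|^2$ (sup over unit $|\psi\rangle\in F$ and strictly increasing sequences $0\le n_1<n_2<\cdots$). For $\lambda\in[0,1)$, $\mathcal{L}^{>\lambda}(\mathcal{A}|\mathrm{ND})=\{w\in\Sigma^\omega:f^{\mathrm{ND}}_{\mathcal{A}}(w)>\lambda\}$ and $\mathbb{L}^{>\lambda}(\mathrm{QBA}|\mathrm{ND})$ is the class of all such languages as $\mathcal{A}$ ranges over quantum automata. The limit of a sequence of sets $L^{(k)}$ is understood in the set-theoretic sense: $\lim_k L^{(k)}=L$ means $\liminf_k L^{(k)}=\limsup_k L^{(k)}=L$. *)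

From HB Require Import structures.
From mathcomp Require Import all_boot all_order all_algebra.
From mathcomp Require Import boolp classical_sets reals.
From mathcomp Require Import complex.
Set Implicit Arguments. Unset Strict Implicit. Unset Printing Implicit Defensive.
Import Order.TTheory GRing.Theory Num.Theory.
Local Open Scope ring_scope.
Local Open Scope classical_set_scope.

Section QA.
Variable R : realType.
Local Notation C := (complex.complex R).

Definition sqmod (z : C) : R := (complex.Re z) ^+ 2 + (complex.Im z) ^+ 2.

Definition adjmx m n (A : 'M[C]_(m, n)) : 'M[C]_(n, m) := (map_mx (@complex.conjc R) A)^T.

Definition innerp d (psi s : 'cV[C]_d) : C := (adjmx psi *m s) 0 0.

Definition unit_vec d (v : 'cV[C]_d) : Prop := \sum_(i < d) sqmod (v i 0) = 1.

Definition unitary d (U : 'M[C]_d) : Prop :=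
  adjmx U *m U = 1%:M /\ U *m adjmx U = 1%:M.

(* A quantum automaton over the finite alphabet Sigma.  The Hilbert space is
   C^qa_dim; the subspace F is the row space of qa_F, a column vector psi
   lies in F iff (psi^T <= qa_F)%MS. *)
Record qautomaton (Sigma : finType) := QAutomaton {
  qa_dim : nat;
  qa_init : 'cV[C]_qa_dim;
  qa_U : Sigma -> 'M[C]_qa_dim;
  qa_F : 'M[C]_qa_dim;
  qa_init_unit : unit_vec qa_init;
  qa_U_unitary : forall a, unitary (qa_U a)
}.

Definition in_F Sigma (A : qautomaton Sigma) (psi : 'cV[C]_(qa_dim A)) : bool :=
  (psi^T <= qa_F A)%MS.
Arguments in_F {Sigma} A psi.

(* non-disturbing run: s_0 = init, s_(n+1) = U_(w n) s_n
   (the word w = sigma_1 sigma_2 ... is w 0, w 1, ...) *)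
Fixpoint run Sigma (A : qautomaton Sigma) (w : nat -> Sigma) (n : nat)
  : 'cV[C]_(qa_dim A) :=
  match n with
  | 0 => qa_init A
  | n'.+1 => qa_U A (w n') *m run A w n'
  end.

Definition strictly_increasing (ns : nat -> nat) : Prop :=
  forall i, (ns i < ns i.+1)%N.

Definition fND Sigma (A : qautomaton Sigma) (w : nat -> Sigma) : R :=
  sup [set x : R | exists psi : 'cV[C]_(qa_dim A),
         [/\ unit_vec psi, in_F A psi &
           exists ns : nat -> nat, strictly_increasing ns /\
             x = inf [set y : R | exists i : nat,
                        y = sqmod (innerp psi (run A w (ns i)))]]].

Definition langND Sigma (A : qautomaton Sigma) (lambda : R) : set (nat -> Sigma) :=
  [set w | lambda < fND A w].

Definition QBA_ND (Sigma : finType) (lambda : R) (L : set (nat -> Sigma)) : Prop :=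
  exists A : qautomaton Sigma, L = langND A lambda.

End QA.

Definition set_liminf T (Ls : nat -> set T) : set T :=
  [set x | exists k, forall j, (k <= j)%N -> Ls j x].
Definition set_limsup T (Ls : nat -> set T) : set T :=
  [set x | forall k, exists j, (k <= j)%N /\ Ls j x].
Definition set_lim_is T (Ls : nat -> set T) (L : set T) : Prop :=
  set_liminf Ls = L /\ set_limsup Ls = L.

(* Unitary orbits are recurrent: by pigeonhole on a finite grid of the unit
   ball, U^m x returns arbitrarily close to x for infinitely many m.  So if
   |<psi|s_n>|^2 >= c > lambda for infinitely many n, fix one such n: the word
   that agrees with w before n and then repeats a single letter forever is
   still accepted, as its run keeps returning near s_n.  Hence no language of the class can demand infinitely many
   occurrences of a letter.  A counter automaton, permuting basis vectors
   cyclically to count the letters [true] modulo m, accepts the words whose count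
   hits a given residue infinitely often: every word with infinitely many [true]s
   and no word whose count is eventually constant.  Freezing such words refutes
   closure under complement, intersection and limits.

   After a unitary change of basis F is spanned by coordinate vectors, and a
   word is accepted iff the mass q_n of the run on these coordinates satisfies
   limsup q_n > lambda.  Weighted direct sums average masses and tensor powers
   raise them to powers.  Thus limsup (q1 + q2)/2 > 0 defines the union of the
   two languages for lambda = 0, and limsup (q1^k + q2^k)/2 > lambda^k, which
   behaves like limsup max(q1, q2) > lambda, defines languages of the class
   converging to the union. *)

From HB Require Import structures.
From mathcomp Require Import all_boot all_order all_algebra all_fingroup.
From mathcomp Require Import boolp classical_sets reals.
From mathcomp Require Import complex sesquilinear spectral mxtens.
From mathcomp Require Import ring lra.
Set Implicit Arguments. Unset Strict Implicit. Unset Printing Implicit Defensive.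
Import Order.TTheory GRing.Theory Num.Theory.
Local Open Scope ring_scope.
Local Open Scope classical_set_scope.

Section ComplexVectors.
Variable R : realType.
Local Notation C := (complex.complex R).

Lemma conjCE (z : C) : Num.conj z = complex.conjc z.
Proof.
have [->|nz] := eqVneq z 0; first by rewrite conjC0 complex.conjc0.
by apply: (mulfI nz); rewrite -normCK complex.sqr_normc.
Qed.

Lemma sqmodE (z : C) : (sqmod z)%:C%C = `|z| ^+ 2.
Proof. exact: complex.add_Re2_Im2. Qed.

Lemma sqmodJ (z : C) : (sqmod z)%:C%C = z^*%C * z.
Proof. by rewrite sqmodE complex.sqr_normc mulrC. Qed.

Lemma sqmod_ge0 (z : C) : 0 <= sqmod z.
Proof. by rewrite addr_ge0 // sqr_ge0. Qed.

Lemma sqmodM (x y : C) : sqmod (x * y) = sqmod x * sqmod y.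
Proof. by case: x y => a b [c d]; rewrite /sqmod /=; ring. Qed.

Lemma sqmod_real (r : R) : sqmod r%:C%C = r ^+ 2.
Proof. by rewrite /sqmod /= expr0n /= addr0. Qed.

Lemma sqmodD_ge (a b : C) (e : R) : 0 <= e -> sqmod a <= 1 -> sqmod b <= e ^+ 2 ->
  sqmod a - 2 * e <= sqmod (a + b).
Proof.
case: a b => p q [r s]; rewrite /sqmod /= => e0 ha hb.
have lagrange : (p * r + q * s) ^+ 2 <= (p ^+ 2 + q ^+ 2) * (r ^+ 2 + s ^+ 2).
  by have := sqr_ge0 (p * s - q * r); nra.
have : (p * r + q * s) ^+ 2 <= e ^+ 2.
  apply: le_trans lagrange _; rewrite -[e ^+ 2]mul1r.
  by apply: ler_pM => //; rewrite addr_ge0 // sqr_ge0.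
have := sqr_ge0 r; have := sqr_ge0 s; nra.
Qed.

Definition norm2 d (v : 'cV[C]_d) : R := \sum_i sqmod (v i 0).

Lemma sqmod_le_norm2 d (v : 'cV[C]_d) i : sqmod (v i 0) <= norm2 v.
Proof. by rewrite /norm2 (bigD1 i) //= lerDl sumr_ge0 // => j _; apply: sqmod_ge0. Qed.

Lemma norm2Z d (k : C) (v : 'cV[C]_d) : norm2 (k *: v) = sqmod k * norm2 v.
Proof. by rewrite /norm2 mulr_sumr; apply: eq_bigr => i _; rewrite mxE sqmodM. Qed.

Lemma innerpE d (psi s : 'cV[C]_d) : innerp psi s = \sum_i (psi i 0)^*%C * s i 0.
Proof. by rewrite /innerp /adjmx !mxE; apply: eq_bigr => i _; rewrite !mxE. Qed.

Lemma innerpDr d (psi x y : 'cV[C]_d) : innerp psi (x + y) = innerp psi x + innerp psi y.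
Proof. by rewrite /innerp mulmxDr mxE. Qed.

Lemma innerpZl d (k : C) (psi x : 'cV[C]_d) :
  innerp (k *: psi) x = k^*%C * innerp psi x.
Proof.
rewrite !innerpE mulr_sumr; apply: eq_bigr => i _.
by rewrite !mxE -!conjCE rmorphM /= mulrA.
Qed.

Lemma norm2_innerp d (v : 'cV[C]_d) : (norm2 v)%:C%C = innerp v v.
Proof. by rewrite innerpE /norm2 rmorph_sum; apply: eq_bigr => i _; apply: sqmodJ. Qed.

Lemma adjmxE m n (A : 'M[C]_(m, n)) : adjmx A = map_mx Num.conj A^T.
Proof. by apply/matrixP => i j; rewrite !mxE conjCE. Qed.

Lemma map_mx_conjK m n (A : 'M[C]_(m, n)) : map_mx Num.conj (map_mx Num.conj A) = A.
Proof. by apply/matrixP => i j; rewrite !mxE conjCK. Qed.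

Lemma adjmxK m n (A : 'M[C]_(m, n)) : adjmx (adjmx A) = A.
Proof. by rewrite !adjmxE; apply: trmxCK. Qed.

Lemma adjmxM m n p (A : 'M[C]_(m, n)) (B : 'M[C]_(n, p)) :
  adjmx (A *m B) = adjmx B *m adjmx A.
Proof. by rewrite /adjmx map_mxM trmx_mul. Qed.

Lemma adjmx1 d : adjmx (1%:M : 'M[C]_d) = 1%:M.
Proof. by rewrite /adjmx map_scalar_mx tr_scalar_mx; congr (_%:M); apply: complex.conjc1. Qed.

Lemma innerp_adjmx m n (U : 'M[C]_(m, n)) psi x :
  innerp psi (U *m x) = innerp (adjmx U *m psi) x.
Proof. by rewrite /innerp adjmxM adjmxK mulmxA. Qed.

Lemma innerp_isometry m n (U : 'M[C]_(m, n)) (x y : 'cV[C]_n) :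
  adjmx U *m U = 1%:M -> innerp (U *m x) (U *m y) = innerp x y.
Proof. by move=> hU; rewrite innerp_adjmx mulmxA hU mul1mx. Qed.

Lemma norm2_isometry m n (U : 'M[C]_(m, n)) (x : 'cV[C]_n) :
  adjmx U *m U = 1%:M -> norm2 (U *m x) = norm2 x.
Proof. by move=> hU; apply: (@complex.complexI R); rewrite !norm2_innerp innerp_isometry. Qed.

Lemma unitaryX d (U : 'M[C]_d) k : adjmx U *m U = 1%:M -> adjmx (U ^+ k) *m U ^+ k = 1%:M.
Proof.
move=> hU; elim: k => [|k IH]; first by rewrite expr0 adjmx1 mul1mx.
have -> : U ^+ k.+1 = U *m U ^+ k by rewrite exprS mulmxE.
by rewrite adjmxM -mulmxA (mulmxA (adjmx U)) hU mul1mx.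
Qed.

Lemma innerp_CauchySchwarz d (a b : 'cV[C]_d) :
  sqmod (innerp a b) <= norm2 a * norm2 b.
Proof.
have dotE (x y : 'cV[C]_d) : dotmx (y^T) (x^T) = innerp x y.
  by rewrite dotmxE innerpE !mxE; apply: eq_bigr => i _; rewrite !mxE conjCE mulrC.
have : `|dotmx (b^T) (a^T)| ^+ 2 <= dotmx (b^T) (b^T) * dotmx (a^T) (a^T)
  := (CauchySchwarz (@dotmx C d) (b^T) (a^T)).1.
by rewrite !dotE -!norm2_innerp -sqmodE -rmorphM /= complex.lecR mulrC.
Qed.

Lemma innerp_perturb d (psi x y : 'cV[C]_d) (e : R) : 0 <= e ->
  norm2 psi = 1 -> norm2 x <= 1 -> norm2 (y - x) <= e ^+ 2 ->
  sqmod (innerp psi x) - 2 * e <= sqmod (innerp psi y).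
Proof.
move=> e0 hpsi hx hyx.
have -> : y = x + (y - x) by rewrite addrC subrK.
by rewrite innerpDr; apply: sqmodD_ge => //;
  apply: le_trans (innerp_CauchySchwarz _ _) _; rewrite hpsi mul1r.
Qed.

Lemma run_norm2 (Sigma : finType) (A : qautomaton R Sigma) w n : norm2 (run A w n) = 1.
Proof.
elim: n => [|n IH] /=; first exact: qa_init_unit.
by rewrite norm2_isometry // (qa_U_unitary A (w n)).1.
Qed.

End ComplexVectors.

Definition inf_often (P : nat -> Prop) := forall N, exists n, (N <= n)%N /\ P n.

Definition eventually (P : nat -> Prop) := exists N, forall n, (N <= n)%N -> P n.

Lemma inf_often_mono (P Q : nat -> Prop) :
  (forall n, P n -> Q n) -> inf_often P -> inf_often Q.
Proof. by move=> PQ hP N; have [n [? ?]] := hP N; exists n; split => //; apply: PQ. Qed.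

Lemma not_inf_often (P : nat -> Prop) : ~ inf_often P -> eventually (fun n => ~ P n).
Proof.
move=> h; apply: contrapT => hn; apply: h => N; apply: contrapT => hN; apply: hn.
by exists N => n hn hP; apply: hN; exists n.
Qed.

Lemma inf_often_or (P Q : nat -> Prop) :
  inf_often (fun n => P n \/ Q n) -> inf_often P \/ inf_often Q.
Proof.
move=> h; case: (pselect (inf_often P)) => hP; [by left | right].
have [N hN] := not_inf_often hP => M; have [n [hn [Pn|Qn]]] := h (maxn N M).
  by case: (hN n) => //; apply: leq_trans hn; apply: leq_maxl.
by exists n; split => //; apply: leq_trans hn; apply: leq_maxr.
Qed.

Lemma inf_often_pigeonhole (K : finType) (f : nat -> K) (P : nat -> Prop) :
  inf_often P -> exists k, inf_often (fun n => P n /\ f n = k).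
Proof.
move=> hP; apply: contrapT => hn.
have /choice [N hN] : forall k, eventually (fun n => ~ (P n /\ f n = k)).
  by move=> k; apply: not_inf_often => hk; apply: hn; exists k.
have [n [leNn Pn]] := hP (\max_k N k).
by apply: (hN (f n) n) => //; apply: leq_trans leNn; apply: leq_bigmax.
Qed.

Lemma strictly_increasing_ge ns : strictly_increasing ns -> forall i, (i <= ns i)%N.
Proof. by move=> h; elim=> [|i IH] //; apply: leq_ltn_trans IH (h i). Qed.

Lemma inf_often_subseq (P : nat -> Prop) : inf_often P ->
  exists ns, strictly_increasing ns /\ forall i, P (ns i).
Proof.
move=> /choice [g hg].
pose ns := fix ns i := if i is i'.+1 then g (ns i').+1 else g 0%N.
by exists ns; split => [i|[|i]]; [apply: (hg _).1 | apply: (hg _).2 ..].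
Qed.

Lemma set_lim_is_eventually T (Ls : nat -> set T) (L : set T) :
  (forall x, L x -> eventually (fun k => Ls k x)) ->
  (forall x, ~ L x -> eventually (fun k => ~ Ls k x)) -> set_lim_is Ls L.
Proof.
move=> inL outL; have liminf_sub : set_liminf Ls `<=` L.
  move=> x [k hk]; apply: contrapT => /outL [K hK].
  by apply: (hK (maxn k K)); [apply: leq_maxr | apply: hk; apply: leq_maxl].
have limsup_sub : set_limsup Ls `<=` L.
  move=> x hx; apply: contrapT => /outL [K hK].
  by have [j [hj]] := hx K; apply: hK j hj.
split; apply/seteqP; split => // x /inL [K hK].
by move=> k; exists (maxn k K); split; [apply: leq_maxl | apply: hK; apply: leq_maxr].
Qed.

Section Limsup.
Variable R : realType.

Definition limsup_gt (q : nat -> R) (lam : R) :=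
  exists c, lam < c /\ inf_often (fun n => c <= q n).

Lemma limsup_gt_le (p q : nat -> R) lam :
  (forall n, p n <= q n) -> limsup_gt p lam -> limsup_gt q lam.
Proof.
move=> pq [c [lc hc]]; exists c; split => //.
by apply: inf_often_mono hc => n /le_trans; apply.
Qed.

Lemma sup_inf_gt (T : Type) (G1 G2 : T -> Prop) (v : T -> nat -> R) (lam : R) :
  0 <= lam -> (forall t n, G1 t -> 0 <= v t n <= 1) ->
  lam < sup [set x : R | exists t, [/\ G1 t, G2 t &
     exists ns : nat -> nat, strictly_increasing ns /\
       x = inf [set y : R | exists i : nat, y = v t (ns i)]]]
  <-> exists t, [/\ G1 t, G2 t & limsup_gt (v t) lam].
Proof.
move=> lam0 hv; split.
- set E := [set x | _] => hE.
  case: (pselect (exists x, E x)) => [[x Ex]|nE]; last first.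
    by move: hE; rewrite sup_out ?ltNge ?lam0 // => -[[x Ex] _]; apply: nE; exists x.
  have [_ [t [g1 g2 [ns [hns ->]]]] hlt] := sup_gt (ex_intro _ x Ex) hE.
  exists t; split => //; exists (inf [set y | exists i, y = v t (ns i)]); split => //.
  move=> N; exists (ns N); split; first exact: strictly_increasing_ge.
  apply: ge_inf; last by exists N.
  by exists 0 => z [i ->]; case/andP: (hv t (ns i) g1).
- move=> [t [g1 g2 [c [hc /inf_often_subseq [ns [hns hP]]]]]].
  pose x := inf [set y | exists i, y = v t (ns i)].
  have cx : c <= x by apply: lb_le_inf; [exists (v t (ns 0)), 0 | move=> z [i ->]].
  apply: (lt_le_trans hc); apply: (le_trans cx); apply: ub_le_sup; last first.
    by exists t; split => //; exists ns.
  exists 1 => z [t' [g1' _ [ns' [_ ->]]]].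
  apply: le_trans (ge_inf _ _) _.
  - by exists 0 => z' [i ->]; case/andP: (hv t' (ns' i) g1').
  - by exists 0%N.
  - by case/andP: (hv t' (ns' 0) g1').
Qed.

Lemma langND_char (Sigma : finType) (A : qautomaton R Sigma) lam w : 0 <= lam ->
  langND A lam w <-> exists psi, [/\ unit_vec psi, @in_F _ _ A psi &
     limsup_gt (fun n => sqmod (innerp psi (run A w n))) lam].
Proof.
move=> lam0; apply: sup_inf_gt => // psi n hpsi; rewrite sqmod_ge0 /=.
by apply: le_trans (innerp_CauchySchwarz _ _) _; rewrite /norm2 hpsi -/(norm2 _) run_norm2 mulr1.
Qed.

End Limsup.

(** * Recurrence of unitary orbits *)

Section Recurrence.
Variable R : realType.
Local Notation C := (complex.complex R).

Definition grid_index (del x : R) : nat := Num.truncn ((x + 1) / del).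

Lemma grid_index_close del x y : 0 < del -> -1 <= x -> -1 <= y ->
  grid_index del x = grid_index del y -> `|x - y| < del.
Proof.
move=> del0 hx hy; rewrite /grid_index => e.
have x0 : 0 <= (x + 1) / del by apply: divr_ge0; [lra | exact: ltW].
have y0 : 0 <= (y + 1) / del by apply: divr_ge0; [lra | exact: ltW].
have /andP[x1 x2] := truncn_itv x0; have /andP[y1 y2] := truncn_itv y0.
rewrite e -natr1 in x1 x2 y2.
have : `|(x + 1) / del - (y + 1) / del| < 1 by rewrite ltr_norml; lra.
rewrite -mulrBl opprD addrACA subrr addr0 normrM (gtr0_norm (x := del^-1)) ?invr_gt0 //.
by rewrite ltr_pdivrMr // mul1r.
Qed.

Lemma grid_index_le del x : 0 < del -> x <= 1 -> (grid_index del x <= Num.truncn (2 / del))%N.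
Proof. by move=> del0 hx; apply: le_truncn; rewrite ler_pM2r ?invr_gt0 //; lra. Qed.

Lemma sqr_le1_itv (r : R) : r ^+ 2 <= 1 -> -1 <= r <= 1.
Proof. by move=> h; apply/andP; split; nra. Qed.

Lemma norm2_le1_Re d (v : 'cV[C]_d) i : norm2 v <= 1 -> -1 <= complex.Re (v i 0) <= 1.
Proof.
move=> h; apply: sqr_le1_itv; have := le_trans (sqmod_le_norm2 v i) h.
by have := sqr_ge0 (complex.Im (v i 0)); rewrite /sqmod; lra.
Qed.

Lemma norm2_le1_Im d (v : 'cV[C]_d) i : norm2 v <= 1 -> -1 <= complex.Im (v i 0) <= 1.
Proof.
move=> h; apply: sqr_le1_itv; have := le_trans (sqmod_le_norm2 v i) h.
by have := sqr_ge0 (complex.Re (v i 0)); rewrite /sqmod; lra.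
Qed.

Definition grid_cell d del (v : 'cV[C]_d) :
    {ffun 'I_d * bool -> 'I_(Num.truncn (2 / del)).+1} :=
  [ffun p => inord (grid_index del
     (if p.2 then complex.Re (v p.1 0) else complex.Im (v p.1 0)))].

Lemma grid_cell_close d del (v v' : 'cV[C]_d) : 0 < del -> norm2 v <= 1 -> norm2 v' <= 1 ->
  grid_cell del v = grid_cell del v' -> norm2 (v - v') <= d%:R * (2 * del ^+ 2).
Proof.
move=> del0 hv hv' /ffunP cell_eq.
rewrite /norm2 mulr_natl -[X in _ *+ X]card_ord -sumr_const; apply: ler_sum => i _.
have close b (x x' : R) : -1 <= x <= 1 -> -1 <= x' <= 1 ->
    (if b then complex.Re (v i 0) else complex.Im (v i 0)) = x ->
    (if b then complex.Re (v' i 0) else complex.Im (v' i 0)) = x' -> (x - x') ^+ 2 <= del ^+ 2.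
  move=> /andP[x0 x1] /andP[x0' x1'] ex ex'.
  move: (cell_eq (i, b)) => /(congr1 val); rewrite !ffunE /= ex ex'.
  rewrite !inordK ?ltnS ?grid_index_le // => /(grid_index_close del0 x0 x0').
  by rewrite ltr_norml => /andP[? ?]; nra.
have := close true _ _ (norm2_le1_Re i hv) (norm2_le1_Re i hv') erefl erefl.
have := close false _ _ (norm2_le1_Im i hv) (norm2_le1_Im i hv') erefl erefl.
by rewrite /sqmod !mxE /=; case: (v i 0) (v' i 0) => a b [a' b'] /=; lra.
Qed.

Lemma inf_often_cluster d (v : nat -> 'cV[C]_d) (P : nat -> Prop) (e : R) : 0 < e ->
  (forall n, P n -> norm2 (v n) <= 1) -> inf_often P ->
  exists n0, P n0 /\ inf_often (fun n => P n /\ norm2 (v n - v n0) <= e).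
Proof.
move=> e0 hv hP.
pose del := Num.min e 1 / (2 * d%:R + 1).
have d0 : 0 <= d%:R :> R by rewrite ler0n.
have del0 : 0 < del by rewrite divr_gt0 ?lt_min ?e0 //; lra.
have hdel : del * (2 * d%:R + 1) = Num.min e 1 by rewrite divfK //; lra.
have min_e : Num.min e 1 <= e by rewrite ge_min lexx.
have min_1 : Num.min e 1 <= 1 by rewrite ge_min lexx orbT.
have small : d%:R * (2 * del ^+ 2) <= e.
  have del1 : del <= 1.
    by apply: le_trans min_1; rewrite -hdel; apply: ler_peMr; [exact: ltW | lra].
  have sq : del ^+ 2 <= del by rewrite expr2; apply: ler_piMl; [exact: ltW | exact: del1].
  have : d%:R * (2 * del ^+ 2) <= d%:R * (2 * del) by rewrite ler_wpM2l // ler_wpM2l.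
  have : d%:R * (2 * del) + del = Num.min e 1 by rewrite -hdel; ring.
  lra.
have [k hk] := inf_often_pigeonhole (fun n => grid_cell del (v n)) hP.
have [n0 [_ [P0 c0]]] := hk 0%N.
exists n0; split => //; apply: inf_often_mono hk => n [Pn cn]; split => //.
by apply: le_trans small; apply: grid_cell_close; rewrite ?hv // cn c0.
Qed.

Lemma unitary_recurrence d (U : 'M[C]_d) (x : 'cV[C]_d) (e : R) :
  adjmx U *m U = 1%:M -> norm2 x <= 1 -> 0 < e ->
  inf_often (fun m => norm2 (U ^+ m *m x - x) <= e).
Proof.
move=> hU hx e0.
have hv n : True -> norm2 (U ^+ n *m x) <= 1 by rewrite norm2_isometry ?unitaryX.
have [n0 [_ hio]] := inf_often_cluster e0 hv (fun N => ex_intro _ N (conj (leqnn N) I)).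
move=> N; have [n [hn [_ hclose]]] := hio (n0 + N)%N.
have le_n0n : (n0 <= n)%N by apply: leq_trans hn; apply: leq_addr.
exists (n - n0)%N; split; first by rewrite leq_subRL.
have eU : U ^+ n0 *m U ^+ (n - n0) = U ^+ n by rewrite mulmxE -exprD subnKC.
by rewrite -(norm2_isometry _ (unitaryX n0 hU)) mulmxBr mulmxA eU.
Qed.

Definition freeze (Sigma : Type) (w : nat -> Sigma) n (s : Sigma) : nat -> Sigma :=
  fun i => if (i < n)%N then w i else s.

Variable Sigma : finType.
Variable A : qautomaton R Sigma.

Lemma run_freeze_prefix w n s : run A (freeze w n s) n = run A w n.
Proof.
suff pre m : (m <= n)%N -> run A (freeze w n s) m = run A w m by apply: pre.
elim: m => [|m IH] lt_mn; first by [].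
by rewrite [LHS]/= [RHS]/= {1}/freeze lt_mn IH 1?ltnW.
Qed.

Lemma run_freeze_suffix w n s m :
  run A (freeze w n s) (n + m) = qa_U A s ^+ m *m run A w n.
Proof.
elim: m => [|m IH]; first by rewrite addn0 expr0 mul1mx run_freeze_prefix.
have UX : qa_U A s ^+ m.+1 = qa_U A s *m qa_U A s ^+ m by rewrite exprS mulmxE.
by rewrite addnS [LHS]/= IH {1}/freeze ltnNge leq_addr UX mulmxA.
Qed.

Lemma langND_freeze lam w s : 0 <= lam -> langND A lam w -> exists n, langND A lam (freeze w n s).
Proof.
move=> lam0 /(langND_char _ _ lam0) [psi [hpsi hF [c [lam_c hio]]]].
have [n [_ hn]] := hio 0%N.
exists n; apply/(langND_char _ _ lam0); exists psi; split => //.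
pose e := (c - lam) / 4.
have e0 : 0 < e by rewrite /e divr_gt0 //; lra.
exists (c - 2 * e); split; first by rewrite /e; lra.
have [hU _] := qa_U_unitary A s.
have hx : norm2 (run A w n) <= 1 by rewrite run_norm2.
have hrec := unitary_recurrence hU hx (exprn_gt0 2 e0).
move=> N; have [m [hm hclose]] := hrec N.
exists (n + m)%N; split; first by apply: leq_trans hm (leq_addl _ _).
rewrite run_freeze_suffix; apply: le_trans (innerp_perturb (ltW e0) hpsi _ hclose).
  by rewrite lerD2r.
by rewrite run_norm2.
Qed.

End Recurrence.

Lemma QBA_ND_freeze (R : realType) (Sigma : finType) (lam : R) (L : set (nat -> Sigma)) w s :
  0 <= lam -> QBA_ND lam L -> L w -> exists n, L (freeze w n s).
Proof. by move=> lam0 [A ->]; apply: langND_freeze. Qed.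

(** * Counter automata *)

Fixpoint ntrue (w : nat -> bool) n : nat := if n is n'.+1 then (ntrue w n' + w n')%N else 0%N.

Lemma ntrue_mono (w : nat -> bool) : {homo ntrue w : m n / (m <= n)%N}.
Proof. by apply: homo_leq => // [m n p /leq_trans|n]; [apply | apply: leq_addr]. Qed.

Lemma nat_ivt (f : nat -> nat) N m v : (forall n, f n.+1 <= (f n).+1)%N -> (N <= m)%N ->
  (f N <= v <= f m)%N -> exists n, (N <= n)%N /\ f n = v.
Proof.
move=> step; elim: m => [|m IH].
  rewrite leqn0 => /eqP -> /andP[h1 h2]; exists 0%N; split => //.
  by apply/eqP; rewrite eqn_leq h1 h2.
rewrite leq_eqVlt => /orP[/eqP <- /andP[h1 h2]|leNm /andP[h1 h2]].
  by exists N; split => //; apply/eqP; rewrite eqn_leq h1 h2.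
have [le_v_fm|lt_fm_v] := leqP v (f m); first by apply: IH; rewrite ?h1.
by exists m.+1; split; [apply: ltnW | apply/eqP; rewrite eqn_leq h2 (leq_trans (step m))].
Qed.

Lemma ntrue_unbounded (w : nat -> bool) :
  inf_often (fun n => w n) -> forall v, exists n, (v <= ntrue w n)%N.
Proof.
move=> hw; elim=> [|v [n hn]]; first by exists 0%N.
have [i [le_ni wi]] := hw n; exists i.+1.
by rewrite /= wi addn1 ltnS (leq_trans hn) ?ntrue_mono.
Qed.

Lemma ntrue_hits (w : nat -> bool) : inf_often (fun n => w n) ->
  forall N v, (ntrue w N <= v)%N -> exists n, (N <= n)%N /\ ntrue w n = v.
Proof.
move=> hw N v le_v; have [m hm] := ntrue_unbounded hw v.
apply: (@nat_ivt _ N (maxn m N)); first by move=> n /=; case: (w n); rewrite ?addn0 ?addn1.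
  exact: leq_maxr.
by rewrite le_v (leq_trans hm) // ntrue_mono // leq_maxl.
Qed.

Lemma ntrue_eventually_const (w : nat -> bool) : eventually (fun n => ~ w n) ->
  exists c, eventually (fun n => ntrue w n = c).
Proof.
move=> [N hN]; exists (ntrue w N); exists N.
elim=> [|n IH]; first by rewrite leqn0 => /eqP ->.
rewrite leq_eqVlt => /orP[/eqP <- //|]; rewrite ltnS => le_Nn.
by move/negP/negbTE: (hN n le_Nn) => /= ->; rewrite addn0 IH.
Qed.

Section CounterAutomaton.
Variable R : realType.
Local Notation C := (complex.complex R).

Lemma adjmx_perm n (s : {perm 'I_n}) : adjmx (perm_mx s : 'M[C]_n) = perm_mx s^-1%g.
Proof.
by rewrite adjmxE tr_perm_mx; apply/matrixP => i j; rewrite !mxE conjC_nat.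
Qed.

Lemma unitary_perm n (s : {perm 'I_n}) : unitary (perm_mx s : 'M[C]_n).
Proof. by split; rewrite adjmx_perm -perm_mxM ?mulVg ?mulgV perm_mx1. Qed.

Lemma unitary1 n : unitary (1%:M : 'M[C]_n).
Proof. by split; rewrite adjmx1 mul1mx. Qed.

Definition basis_vec n (j : 'I_n) : 'cV[C]_n := delta_mx j 0.

Lemma perm_mx_basis_vec n (s : {perm 'I_n}) j : perm_mx s *m basis_vec j = basis_vec (s^-1%g j).
Proof.
apply/matrixP => i k; rewrite [k]ord1 !mxE (bigD1 j) //= big1 => [|l ne_lj]; last first.
  by rewrite !mxE (negPf ne_lj) ?andbF ?andFb mulr0.
by rewrite !mxE eqxx mulr1 addr0 !andbT (can2_eq (permK s) (permKV s)).
Qed.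

Lemma innerp_basis_vec n (psi : 'cV[C]_n) j : innerp psi (basis_vec j) = (psi j 0)^*%C.
Proof.
rewrite innerpE (bigD1 j) //= big1 => [|i ne_ij]; last by rewrite !mxE (negPf ne_ij) mulr0.
by rewrite !mxE !eqxx mulr1 addr0.
Qed.

Lemma norm2_basis_vec n (j : 'I_n) : norm2 (basis_vec j) = 1.
Proof.
apply: (@complex.complexI R); rewrite norm2_innerp innerp_basis_vec !mxE !eqxx.
exact: complex.conjc1.
Qed.

Variables (M : nat) (t : 'I_M.+1).

Definition shift_perm : {perm 'I_M.+1} := perm (@ordS_inj M.+1).

Definition counter_U (b : bool) : 'M[C]_M.+1 := if b then perm_mx shift_perm^-1%g else 1%:M.

Lemma counter_U_unitary b : unitary (counter_U b).
Proof. by case: b; [apply: unitary_perm | apply: unitary1]. Qed.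

(* The run sits on the basis vector indexed by the number of [true]s read,
   modulo [M + 1]; [F] is the line of [basis_vec t]. *)
Definition counterA : qautomaton R bool :=
  QAutomaton (delta_mx t t) (norm2_basis_vec 0) counter_U_unitary.

Lemma run_counterA w n : run counterA w n = basis_vec (inZp (ntrue w n)).
Proof.
elim: n => [|n IH] //=; rewrite IH /counter_U; case: (w n); last by rewrite mul1mx addn0.
rewrite perm_mx_basis_vec invgK permE; congr basis_vec; apply: val_inj => /=.
by rewrite -addn1 modnDml.
Qed.

Lemma counterA_in_F (psi : 'cV[C]_M.+1) :
  @in_F _ _ counterA psi -> forall i, i != t -> psi i 0 = 0.
Proof.
move=> /submxP [X /matrixP hX] i ne_it; move: (hX 0 i); rewrite !mxE => ->.
rewrite big1 // => k _.
by rewrite !mxE (negPf ne_it) andbF mulr0.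
Qed.

Lemma counterA_char (lam : R) w : 0 <= lam < 1 ->
  langND counterA lam w <-> inf_often (fun n => ntrue w n %% M.+1 = t)%N.
Proof.
move=> /andP[lam0 lam1]; rewrite langND_char //; split.
- move=> [psi [_ hF [c [lam_c hio]]]]; apply: inf_often_mono hio => n.
  rewrite run_counterA innerp_basis_vec; have [<- //|ne] := eqVneq (inZp (ntrue w n)) t.
  rewrite (counterA_in_F hF ne) complex.conjc0 /sqmod /= expr0n /= addr0.
  by move=> /(lt_le_trans (le_lt_trans lam0 lam_c)); rewrite ltxx.
- move=> hio; exists (basis_vec t); split; first exact: norm2_basis_vec.
    by rewrite /in_F /= trmx_delta -(@mul_delta_mx _ 1 M.+1 M.+1 t 0 t) submxMl.
  exists 1; split => //; apply: inf_often_mono hio => n hn.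
  rewrite run_counterA (_ : inZp (ntrue w n) = t); last exact: val_inj.
  by rewrite innerp_basis_vec !mxE !eqxx complex.conjc1 /sqmod /= expr1n expr0n addr0.
Qed.

Lemma counterA_inf_often_true (lam : R) (w : nat -> bool) : 0 <= lam < 1 ->
  inf_often (fun n => w n) -> langND counterA lam w.
Proof.
move=> hlam hw; apply/counterA_char => // N.
pose c := ntrue w N; pose v := ((c %/ M.+1).+1 * M.+1 + t)%N.
have [|n [le_Nn hit]] := @ntrue_hits w hw N v.
  by rewrite /v mulSnr -addnA -/c {1}(divn_eq c M.+1) leq_add2l ltnW // ltn_addr // ltn_pmod.
by exists n; split => //; rewrite hit /v modnMDl modn_small.
Qed.

Lemma counterA_final_count (lam : R) (w : nat -> bool) c : 0 <= lam < 1 ->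
  eventually (fun n => ntrue w n = c) -> langND counterA lam w -> (c %% M.+1)%N = t.
Proof.
move=> hlam [N hN] /(counterA_char _ hlam) /(_ N) [n [le_Nn]].
by rewrite hN.
Qed.

End CounterAutomaton.

Lemma freeze_false_eventually (w : nat -> bool) n : eventually (fun i => ~ freeze w n false i).
Proof. by exists n => i le_ni; rewrite /freeze ltnNge le_ni. Qed.

Lemma freeze_true_inf_often (w : nat -> bool) n : inf_often (fun i => freeze w n true i).
Proof. by move=> N; exists (maxn N n); rewrite leq_maxl /freeze ltnNge leq_maxr. Qed.

Section CounterLanguages.
Variables (R : realType) (lam : R).
Hypothesis hlam : 0 <= lam < 1.

Let lam0 : 0 <= lam. Proof. by case/andP: hlam. Qed.

Lemma QBA_ND_not_setI_closed : exists (Sigma : finType) (L1 L2 : set (nat -> Sigma)),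
  QBA_ND lam L1 /\ QBA_ND lam L2 /\ ~ QBA_ND lam (L1 `&` L2).
Proof.
pose odd_often := langND (counterA R (@ord_max 1)) lam.
pose even_often := langND (counterA R (@ord0 1)) lam.
exists bool, odd_often, even_often; split; first by exists (counterA R (@ord_max 1)).
split; first by exists (counterA R (@ord0 1)).
move=> hI; have all_true : (odd_often `&` even_often) (fun _ => true).
  by split; apply: counterA_inf_often_true => // N; exists N.
have [n [hodd heven]] := QBA_ND_freeze false lam0 hI all_true.
have [c hc] := ntrue_eventually_const (freeze_false_eventually (fun _ => true) n).
have := counterA_final_count hlam hc hodd.
by rewrite (counterA_final_count hlam hc heven).
Qed.

Lemma QBA_ND_not_setC_closed : exists (Sigma : finType) (L : set (nat -> Sigma)),
  QBA_ND lam L /\ ~ QBA_ND lam (~` L).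
Proof.
pose odd_often := langND (counterA R (@ord_max 1)) lam.
exists bool, odd_often; split; first by exists (counterA R (@ord_max 1)).
move=> hC; have all_false : (~` odd_often) (fun _ => false).
  have count0 : eventually (fun n => ntrue (fun _ => false) n = 0%N).
    by exists 0%N; elim=> //= n IH _; rewrite IH.
  by move/(counterA_final_count hlam count0).
have [n hn] := QBA_ND_freeze true lam0 hC all_false.
by apply: hn; apply: counterA_inf_often_true => //; apply: freeze_true_inf_often.
Qed.

Lemma QBA_ND_not_limit_closed : exists (Sigma : finType) (Ls : nat -> set (nat -> Sigma))
    (L : set (nat -> Sigma)),
  (forall k, QBA_ND lam (Ls k)) /\ set_lim_is Ls L /\ ~ QBA_ND lam L.
Proof.
pose Ls k := langND (counterA R (@ord_max k.+1)) lam.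
pose L := [set w : nat -> bool | inf_often (fun n => w n)].
exists bool, Ls, L; split; first by move=> k; exists (counterA R (@ord_max k.+1)).
split.
  apply: set_lim_is_eventually => w hw.
    by exists 0%N => k _; apply: counterA_inf_often_true.
  have [c hc] := ntrue_eventually_const (not_inf_often hw).
  exists c => k le_ck /(counterA_final_count hlam hc) /=.
  by rewrite modn_small ?ltnS ?leqW // => eq_ck; move: le_ck; rewrite eq_ck ltnn.
move=> hL; have all_true : L (fun _ => true) by move=> N; exists N.
have [n hn] := QBA_ND_freeze false lam0 hL all_true.
have [N hN] := freeze_false_eventually (fun _ => true) n.
by have [i [le_Ni]] := hn N; apply: hN.
Qed.

End CounterLanguages.

(** * Automata with a coordinate accepting subspace *)

Section MaskedVectors.
Variable R : realType.
Local Notation C := (complex.complex R).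

Definition mask_mass d (S : pred 'I_d) (x : 'cV[C]_d) : R := \sum_(i | S i) sqmod (x i 0).

Definition mask_proj d (S : pred 'I_d) (x : 'cV[C]_d) : 'cV[C]_d :=
  \col_i (if S i then x i 0 else 0).

Lemma mask_mass_ge0 d S (x : 'cV[C]_d) : 0 <= mask_mass S x.
Proof. by apply: sumr_ge0 => i _; apply: sqmod_ge0. Qed.

Lemma mask_mass_le_norm2 d S (x : 'cV[C]_d) : mask_mass S x <= norm2 x.
Proof. by rewrite [norm2 x](bigID S) /= lerDl sumr_ge0 // => i _; apply: sqmod_ge0. Qed.

Lemma mask_massT d (x : 'cV[C]_d) : mask_mass predT x = norm2 x.
Proof. by []. Qed.

Lemma mask_massZ d S (k : C) (x : 'cV[C]_d) : mask_mass S (k *: x) = sqmod k * mask_mass S x.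
Proof. by rewrite /mask_mass mulr_sumr; apply: eq_bigr => i _; rewrite mxE sqmodM. Qed.

Lemma norm2_mask_proj d S (x : 'cV[C]_d) : norm2 (mask_proj S x) = mask_mass S x.
Proof.
rewrite /norm2 /mask_mass [RHS]big_mkcond; apply: eq_bigr => i _; rewrite mxE.
by case: (S i); rewrite // sqmod_real expr0n.
Qed.

Lemma innerp_mask_proj d S (psi x : 'cV[C]_d) : (forall i, ~~ S i -> psi i 0 = 0) ->
  innerp psi x = innerp psi (mask_proj S x).
Proof.
move=> supp; rewrite !innerpE; apply: eq_bigr => i _; rewrite mxE.
by case Si : (S i) => //; rewrite supp ?Si // mulr0 complex.conjc0 mul0r.
Qed.

Lemma innerp_masked_le d S (psi x : 'cV[C]_d) : norm2 psi = 1 ->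
  (forall i, ~~ S i -> psi i 0 = 0) -> sqmod (innerp psi x) <= mask_mass S x.
Proof.
move=> hpsi supp; rewrite (innerp_mask_proj x supp) -norm2_mask_proj.
by apply: le_trans (innerp_CauchySchwarz _ _) _; rewrite hpsi mul1r.
Qed.

Lemma normalize_vec d (x : 'cV[C]_d) : 0 < norm2 x ->
  exists psi, [/\ norm2 psi = 1, sqmod (innerp psi x) = norm2 x &
                  forall i, x i 0 = 0 -> psi i 0 = 0].
Proof.
move=> x0; pose a := (Num.sqrt (norm2 x))^-1.
have a2 : a ^+ 2 * norm2 x = 1 by rewrite exprVn sqr_sqrtr ?mulVf ?gt_eqF // ltW.
exists (a%:C%C *: x); split.
- by rewrite norm2Z sqmod_real.
- rewrite innerpZl complex.conjc_real -norm2_innerp -rmorphM sqmod_real.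
  by rewrite exprMn mulrA a2 mul1r.
- by move=> i xi0; rewrite mxE xi0 mulr0.
Qed.

End MaskedVectors.

Section MaskedAutomata.
Variables (R : realType) (Sigma : finType).
Local Notation C := (complex.complex R).

(* A quantum automaton whose accepting subspace is spanned by the basis
   vectors indexed by [mq_mask]. *)
Record maskQA := MaskQA {
  mq_dim : nat;
  mq_init : 'cV[C]_mq_dim;
  mq_U : Sigma -> 'M[C]_mq_dim;
  mq_mask : pred 'I_mq_dim;
  mq_init_unit : unit_vec mq_init;
  mq_U_unitary : forall a, unitary (mq_U a)
}.
Arguments mq_mask : clear implicits.

Definition mask_mx d (S : pred 'I_d) : 'M[C]_d := diag_mx (\row_i (S i)%:R).

Definition mq_qa (M : maskQA) : qautomaton R Sigma :=
  QAutomaton (mask_mx (mq_mask M)) (mq_init_unit M) (mq_U_unitary M).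

Lemma in_F_mq (M : maskQA) psi :
  @in_F _ _ (mq_qa M) psi <-> forall i, ~~ mq_mask M i -> psi i 0 = 0.
Proof.
split.
  move=> /submxP [X /matrixP hX] i Si; move: (hX 0 i).
  by rewrite mul_mx_diag !mxE (negPf Si) mulr0.
move=> supp; rewrite /in_F /= /mask_mx.
have -> : psi^T = psi^T *m diag_mx (\row_i (mq_mask M i)%:R).
  apply/matrixP => k j; rewrite mul_mx_diag !mxE [k]ord1.
  by case Sj : (mq_mask M j); rewrite ?mulr1 ?mulr0 // supp ?Sj.
exact: submxMl.
Qed.

Definition mq_mass (M : maskQA) w n : R := mask_mass (mq_mask M) (run (mq_qa M) w n).

Lemma mq_mass_ge0 M w n : 0 <= mq_mass M w n.
Proof. exact: mask_mass_ge0. Qed.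

Lemma langND_mq (M : maskQA) lam w : 0 <= lam ->
  langND (mq_qa M) lam w <-> limsup_gt (mq_mass M w) lam.
Proof.
move=> lam0; rewrite langND_char //; split.
  move=> [psi [hpsi /in_F_mq supp]]; apply: limsup_gt_le => n.
  exact: innerp_masked_le.
move=> [c [lam_c hio]].
pose y n := mask_proj (mq_mask M) (run (mq_qa M) w n).
have y_le1 n : c <= mq_mass M w n -> norm2 (y n) <= 1.
  move=> _; rewrite norm2_mask_proj; apply: le_trans (mask_mass_le_norm2 _ _) _.
  by rewrite (run_norm2 (mq_qa M)).
pose e := (c - lam) / 4; have e0 : 0 < e by rewrite divr_gt0 //; lra.
have [n0 [c_n0 hclose]] := inf_often_cluster (exprn_gt0 2 e0) y_le1 hio.
have q0_pos : 0 < norm2 (y n0) by rewrite norm2_mask_proj; apply: lt_le_trans c_n0; lra.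
have [psi [hpsi psi_y0 psi_supp]] := normalize_vec q0_pos.
have supp i : ~~ mq_mask M i -> psi i 0 = 0 by move=> Si; apply: psi_supp; rewrite mxE (negPf Si).
exists psi; split => //; first exact/in_F_mq.
exists (c - 2 * e); split; first by rewrite /e; lra.
apply: inf_often_mono hclose => n [_ close_n].
rewrite (innerp_mask_proj _ supp) -/(y n).
apply: le_trans (innerp_perturb (ltW e0) hpsi (y_le1 _ c_n0) close_n).
by rewrite psi_y0 norm2_mask_proj lerD2r.
Qed.

Lemma QBA_ND_mq (M : maskQA) (lam : R) : 0 <= lam ->
  QBA_ND lam [set w | limsup_gt (mq_mass M w) lam].
Proof.
by move=> lam0; exists (mq_qa M); apply/seteqP; split => w /(langND_mq M w lam0).
Qed.

End MaskedAutomata.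
Arguments mq_mask {R Sigma} M _ : rename.

Section MaskConstructions.
Variables (R : realType) (Sigma : finType).
Local Notation C := (complex.complex R).
Local Notation maskQA := (maskQA R Sigma).

Definition mask_sum m n (S1 : pred 'I_m) (S2 : pred 'I_n) : pred 'I_(m + n) :=
  fun i => match split i with inl j => S1 j | inr j => S2 j end.

Lemma mask_mass_col_mx m n S1 S2 (x : 'cV[C]_m) (y : 'cV[C]_n) :
  mask_mass (mask_sum S1 S2) (col_mx x y) = mask_mass S1 x + mask_mass S2 y.
Proof.
rewrite /mask_mass big_split_ord /=; congr (_ + _); apply: eq_big => i.
- by rewrite /mask_sum (unsplitK (inl _ i)).
- by rewrite col_mxEu.
- by rewrite /mask_sum (unsplitK (inr _ i)).
- by rewrite col_mxEd.
Qed.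

Lemma norm2_col_mx m n (x : 'cV[C]_m) (y : 'cV[C]_n) : norm2 (col_mx x y) = norm2 x + norm2 y.
Proof.
by rewrite /norm2 big_split_ord; congr (_ + _); apply: eq_bigr => i _; rewrite ?col_mxEu ?col_mxEd.
Qed.

Lemma adjmx0 m n : adjmx (0 : 'M[C]_(m, n)) = 0.
Proof. by rewrite adjmxE trmx0 map_mx0. Qed.

Lemma unitary_block m n (A : 'M[C]_m) (B : 'M[C]_n) :
  unitary A -> unitary B -> unitary (block_mx A 0 0 B).
Proof.
have adj_block : adjmx (block_mx A 0 0 B) = block_mx (adjmx A) 0 0 (adjmx B).
  by rewrite /adjmx map_block_mx tr_block_mx -!/(adjmx _) !adjmx0.
move=> [hA1 hA2] [hB1 hB2]; rewrite /unitary adj_block !mulmx_block hA1 hA2 hB1 hB2.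
by rewrite !mulmx0 !mul0mx !addr0 !add0r -!scalar_mx_block.
Qed.

Section Mix.
Variables (t : R) (ht : 0 <= t <= 1) (M1 M2 : maskQA).

Definition mix_init : 'cV[C]_(mq_dim M1 + mq_dim M2) :=
  col_mx ((Num.sqrt t)%:C%C *: mq_init M1) ((Num.sqrt (1 - t))%:C%C *: mq_init M2).

Lemma mix_init_unit : unit_vec mix_init.
Proof.
have [t0 t1] : 0 <= t /\ 0 <= 1 - t by case/andP: ht; split; lra.
rewrite /unit_vec -/(norm2 _) /mix_init norm2_col_mx !norm2Z !sqmod_real !sqr_sqrtr //.
by rewrite [norm2 _](mq_init_unit M1) [norm2 _](mq_init_unit M2); ring.
Qed.

Definition mq_mix : maskQA :=
  @MaskQA R Sigma _ mix_init (fun s => block_mx (mq_U M1 s) 0 0 (mq_U M2 s))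
    (mask_sum (mq_mask M1) (mq_mask M2)) mix_init_unit
    (fun s => unitary_block (mq_U_unitary M1 s) (mq_U_unitary M2 s)).

Lemma mq_mass_mix w n : mq_mass mq_mix w n = t * mq_mass M1 w n + (1 - t) * mq_mass M2 w n.
Proof.
have [t0 t1] : 0 <= t /\ 0 <= 1 - t by case/andP: ht; split; lra.
have run_mix : run (mq_qa mq_mix) w n = col_mx ((Num.sqrt t)%:C%C *: run (mq_qa M1) w n)
    ((Num.sqrt (1 - t))%:C%C *: run (mq_qa M2) w n).
  elim: n => [|n IH] //=; rewrite IH mul_block_col !mul0mx addr0 add0r.
  by rewrite !scalemxAr.
by rewrite /mq_mass run_mix mask_mass_col_mx !mask_massZ !sqmod_real !sqr_sqrtr.
Qed.

End Mix.

Definition mask_tens m n (S1 : pred 'I_m) (S2 : pred 'I_n) : pred 'I_(m * n) :=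
  fun i => S1 (mxtens_unindex i).1 && S2 (mxtens_unindex i).2.

Lemma mask_mass_tens m n S1 S2 (x : 'cV[C]_m) (y : 'cV[C]_n) :
  mask_mass (mask_tens S1 S2) (x *t y) = mask_mass S1 x * mask_mass S2 y.
Proof.
rewrite /mask_mass (reindex (@mxtens_index m n)) /=; last first.
  by exists (@mxtens_unindex m n) => k _; [apply: mxtens_indexK | apply: mxtens_unindexK].
rewrite big_distrlr /= pair_big_dep /=; apply: eq_big => [[i j]|[i j] _].
  by rewrite /mask_tens mxtens_indexK.
by rewrite mxE mxtens_indexK /= !ord1 sqmodM.
Qed.

Lemma tensmx11 m n : (1%:M : 'M[C]_m) *t (1%:M : 'M[C]_n) = 1%:M.
Proof.
apply/matrixP => i j; case: (mxtens_indexP i) => i1 i2; case: (mxtens_indexP j) => j1 j2.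
rewrite tensmxE !mxE -natrM mulnb; congr (_%:R).
by rewrite (can_eq (@mxtens_indexK _ _)) xpair_eqE.
Qed.

Lemma adjmx_tens m n p q (A : 'M[C]_(m, n)) (B : 'M[C]_(p, q)) :
  adjmx (A *t B) = adjmx A *t adjmx B.
Proof.
rewrite /adjmx -trmx_tens; congr (_^T).
by apply/matrixP => i j; rewrite !mxE -!conjCE rmorphM.
Qed.

Lemma unitary_tens m n (A : 'M[C]_m) (B : 'M[C]_n) :
  unitary A -> unitary B -> unitary (A *t B).
Proof.
by move=> [hA1 hA2] [hB1 hB2]; rewrite /unitary adjmx_tens !tensmx_mul hA1 hA2 hB1 hB2 tensmx11.
Qed.

Lemma tens_init_unit (M1 M2 : maskQA) : unit_vec (mq_init M1 *t mq_init M2).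
Proof.
rewrite /unit_vec -/(norm2 _) -mask_massT.
have -> : mask_mass predT (mq_init M1 *t mq_init M2) =
    mask_mass (mask_tens predT predT) (mq_init M1 *t mq_init M2) by [].
by rewrite mask_mass_tens !mask_massT [norm2 _](mq_init_unit M1) [norm2 _](mq_init_unit M2) mulr1.
Qed.

Definition mq_tens (M1 M2 : maskQA) : maskQA :=
  @MaskQA R Sigma _ (mq_init M1 *t mq_init M2) (fun s => mq_U M1 s *t mq_U M2 s)
    (mask_tens (mq_mask M1) (mq_mask M2))
    (tens_init_unit M1 M2) (fun s => unitary_tens (mq_U_unitary M1 s) (mq_U_unitary M2 s)).

Lemma mq_mass_tens M1 M2 w n : mq_mass (mq_tens M1 M2) w n = mq_mass M1 w n * mq_mass M2 w n.
Proof.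
have run_tens : run (mq_qa (mq_tens M1 M2)) w n = run (mq_qa M1) w n *t run (mq_qa M2) w n.
  elim: n => [|n IH] //=; rewrite IH.
  exact: (tensmx_mul (mq_U M1 (w n)) (mq_U M2 (w n)) (run (mq_qa M1) w n) (run (mq_qa M2) w n)).
by rewrite /mq_mass run_tens mask_mass_tens.
Qed.

Lemma one_init_unit : unit_vec (1%:M : 'cV[C]_1).
Proof. by rewrite /unit_vec big_ord1 mxE sqmod_real expr1n. Qed.

Definition mq_one : maskQA :=
  @MaskQA R Sigma 1 1%:M (fun _ => 1%:M) predT one_init_unit (fun _ => @unitary1 R 1).

Lemma mq_mass_one w n : mq_mass mq_one w n = 1.
Proof.
have run_one : run (mq_qa mq_one) w n = 1%:M by elim: n => //= n ->; rewrite mul1mx.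
by rewrite /mq_mass run_one mask_massT; apply: one_init_unit.
Qed.

Fixpoint mq_pow (M : maskQA) k : maskQA := if k is k'.+1 then mq_tens M (mq_pow M k') else mq_one.

Lemma mq_mass_pow M k w n : mq_mass (mq_pow M k) w n = mq_mass M w n ^+ k.
Proof. by elim: k => [|k IH] /=; rewrite ?mq_mass_one ?mq_mass_tens ?IH ?exprS. Qed.

End MaskConstructions.

Local Notation "B ^!" :=
  (orthomx Num.conj (mx_of_hermitian (hermitian1mx _)) B) : matrix_set_scope.
Local Notation "A '_|_ B" := (A%MS <= B%MS^!)%MS : bool_scope.

Section AdaptedBasis.
Variables (R : realType) (d : nat) (X : 'M[complex.complex R]_d).
Local Notation C := (complex.complex R).
Local Notation dX := (\rank X + \rank X^!)%N.

Lemma dX_eq : dX = d.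
Proof. exact: add_rank_ortho. Qed.

(* Row [i] of [coord_mx] is the conjugate of the [i]-th vector of an
   orthonormal basis whose first [\rank X] vectors span [X], so that
   [coord_mx *m psi] lists the coordinates of [psi] in that basis. *)
Definition coord_mx : 'M[C]_(dX, d) := map_mx Num.conj (schmidt_complete X).

Lemma adjmx_coord_mx : adjmx coord_mx = (schmidt_complete X)^T.
Proof. by rewrite adjmxE map_trmx map_mx_conjK. Qed.

Lemma coord_mx_isometry : adjmx coord_mx *m coord_mx = 1%:M.
Proof.
have := mulmxKtV (1%:M : 'M[C]_d) (schmidt_complete_unitarymx X) dX_eq.
rewrite mul1mx adjmx_coord_mx /coord_mx => /(congr1 (map_mx Num.conj)).
by rewrite map_mxM map_mx1 => <-; rewrite map_mx_conjK.
Qed.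

Lemma coord_mx_coisometry : coord_mx *m adjmx coord_mx = 1%:M.
Proof.
have /unitarymxP := schmidt_complete_unitarymx X.
rewrite adjmx_coord_mx /coord_mx => /(congr1 (map_mx Num.conj)).
by rewrite map_mxM map_mx1 => <-; rewrite map_mx_conjK.
Qed.

Definition coord_mask : pred 'I_dX := fun i => if split i is inl _ then true else false.

Lemma coord_mx_sub (psi : 'cV[C]_d) :
  (psi^T <= X)%MS <-> forall i, ~~ coord_mask i -> (coord_mx *m psi) i 0 = 0.
Proof.
pose B := schmidt (row_base (X^!)%MS).
have B_eq : (B :=: X^!)%MS.
  by apply: eqmx_trans (eq_row_base _); apply: eqmx_schmidt_free; apply: row_base_free.
have coord_r j : (coord_mx *m psi) (rshift _ j) 0 = (psi^T *m map_mx Num.conj B^T) 0 j.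
  rewrite !mxE; apply: eq_bigr => k _.
  by rewrite !mxE /schmidt_complete (unsplitK (inr _ j)) mulrC.
have -> : (psi^T <= X)%MS = (psi^T '_|_ B) by rewrite orthomx_sym B_eq submx_ortho.
split => [/orthomx1P psiB i|coord0].
  rewrite /coord_mask; case split_i : (split i) => [//|j] _.
  have -> : i = rshift _ j by rewrite -(splitK i) split_i.
  by rewrite coord_r; move/matrixP: psiB => /(_ 0 j) ->; rewrite mxE.
apply/orthomx1P/matrixP => k j; rewrite [k]ord1 -coord_r coord0 ?mxE //.
by rewrite /coord_mask (unsplitK (inr _ j)).
Qed.

End AdaptedBasis.

Section MaskedForm.
Variables (R : realType) (Sigma : finType) (A : qautomaton R Sigma).
Local Notation V := (coord_mx (qa_F A)).

Lemma mq_of_qa_init_unit : unit_vec (V *m qa_init A).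
Proof.
by rewrite /unit_vec -/(norm2 _) norm2_isometry ?coord_mx_isometry //; apply: qa_init_unit.
Qed.

Definition mq_of_qa_U s := V *m qa_U A s *m adjmx V.

Lemma mq_of_qa_U_unitary s : unitary (mq_of_qa_U s).
Proof.
have [hU1 hU2] := qa_U_unitary A s.
rewrite /unitary /mq_of_qa_U !adjmxM adjmxK -!mulmxA.
split; rewrite (mulmxA (adjmx V) V) coord_mx_isometry mul1mx.
  by rewrite (mulmxA (adjmx (qa_U A s))) hU1 mul1mx coord_mx_coisometry.
by rewrite (mulmxA (qa_U A s)) hU2 mul1mx coord_mx_coisometry.
Qed.

Definition mq_of_qa : maskQA R Sigma :=
  @MaskQA R Sigma _ (V *m qa_init A) mq_of_qa_U (@coord_mask R _ (qa_F A))
    mq_of_qa_init_unit mq_of_qa_U_unitary.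

Lemma run_mq_of_qa w n : run (mq_qa mq_of_qa) w n = V *m run A w n.
Proof.
elim: n => [|n IH] //=; rewrite IH /mq_of_qa_U -!mulmxA; congr (_ *m _).
by rewrite (mulmxA (adjmx V)) coord_mx_isometry mul1mx.
Qed.

Lemma fND_mq_of_qa w : fND (mq_qa mq_of_qa) w = fND A w.
Proof.
rewrite /fND; congr sup; apply/seteqP; split => x [psi [hpsi hF [ns [hns ->]]]].
- exists (adjmx V *m psi); split.
  + by rewrite /unit_vec -/(norm2 _) norm2_isometry // adjmxK coord_mx_coisometry.
  + by apply/coord_mx_sub; rewrite mulmxA coord_mx_coisometry mul1mx; apply/(@in_F_mq _ _ mq_of_qa).
  + exists ns; split => //; congr inf; apply/seteqP; split => y [i ->]; exists i;
      by rewrite run_mq_of_qa innerp_adjmx.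
- exists (V *m psi); split.
  + by rewrite /unit_vec -/(norm2 _) norm2_isometry // coord_mx_isometry.
  + by apply/(@in_F_mq _ _ mq_of_qa); apply/coord_mx_sub.
  + exists ns; split => //; congr inf; apply/seteqP; split => y [i ->]; exists i;
      by rewrite run_mq_of_qa innerp_isometry // coord_mx_isometry.
Qed.

End MaskedForm.

Lemma QBA_ND_mqP (R : realType) (Sigma : finType) (lam : R) (L : set (nat -> Sigma)) :
  0 <= lam -> QBA_ND lam L -> exists M : maskQA R Sigma, L = [set w | limsup_gt (mq_mass M w) lam].
Proof.
move=> lam0 [A ->]; exists (mq_of_qa A); apply/seteqP; split => w /=.
  by rewrite /langND /= -fND_mq_of_qa => /(langND_mq _ _ lam0).
by move=> /(langND_mq _ _ lam0); rewrite /langND /= fND_mq_of_qa.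
Qed.

(** * Unions *)

Section RealPowers.
Variable R : realType.

Lemma bernoulli_ineq (x : R) n : 0 <= x -> 1 + n%:R * x <= (1 + x) ^+ n.
Proof.
move=> x0; elim: n => [|n IH]; first by rewrite mul0r addr0 expr0.
have := mulr_ge0 (ler0n R n) x0; rewrite exprS -natr1; nra.
Qed.

Lemma exprn_gt_eventually (r B : R) : 1 < r -> eventually (fun n => B < r ^+ n).
Proof.
move=> r1; exists (Num.truncn (B / (r - 1))).+1 => n le_n.
have r1_pos : 0 < r - 1 by lra.
have := bernoulli_ineq n (ltW r1_pos); rewrite [1 + (r - 1)]addrC subrK; apply: lt_le_trans.
have : B / (r - 1) < n%:R.
  by apply: lt_le_trans (truncnS_gt _) _; rewrite ler_nat.
by rewrite ltr_pdivrMr //; lra.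
Qed.

Lemma subrXX_le (x y : R) n : 0 <= x -> x <= y -> y <= 1 -> y ^+ n - x ^+ n <= n%:R * (y - x).
Proof.
move=> x0 xy y1; elim: n => [|n IH]; first by rewrite !expr0 subrr mul0r.
have xn0 : 0 <= x ^+ n by apply: exprn_ge0.
have yn1 : y ^+ n <= 1 by apply: exprn_ile1 => //; apply: le_trans xy.
have xyn : x ^+ n <= y ^+ n by apply: lerXn2r; rewrite // nnegrE (le_trans x0 xy).
rewrite !exprS -natr1; nra.
Qed.

Lemma exprn_right_cont (x dl : R) n : 0 <= x < 1 -> 0 < dl ->
  exists y, x < y /\ y ^+ n < x ^+ n + dl.
Proof.
move=> /andP[x0 x1] dl0.
pose e := Num.min ((1 - x) / 2) (dl / (n%:R + 1)).
have n0 : 0 <= n%:R :> R by rewrite ler0n.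
have e0 : 0 < e by rewrite lt_min !divr_gt0 //; lra.
have e1 : e <= (1 - x) / 2 by rewrite ge_min lexx.
have e2 : e * (n%:R + 1) <= dl by rewrite -ler_pdivlMr ?ge_min ?lexx ?orbT //; lra.
exists (x + e); split; first by lra.
have := @subrXX_le x (x + e) n x0 (ltW (ltr_pwDr e0 (lexx _))) ltac:(lra).
rewrite addrAC subrr add0r; nra.
Qed.

End RealPowers.

Section LimsupGt.
Variable R : realType.
Implicit Types (p q : nat -> R) (lam : R).

Lemma limsup_gt_affine p (g b lam : R) : 0 < g ->
  limsup_gt (fun n => g * p n + b) (g * lam + b) <-> limsup_gt p lam.
Proof.
move=> g0; split => [[c [lam_c hio]]|[c [lam_c hio]]].
  exists ((c - b) / g); split; first by rewrite ltr_pdivlMr // mulrC; lra.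
  by apply: inf_often_mono hio => n; rewrite ler_pdivrMr // mulrC; lra.
exists (g * c + b); split; first by rewrite ltrD2r ltr_pM2l.
by apply: inf_often_mono hio => n; rewrite lerD2r ler_pM2l.
Qed.

Lemma limsup_gt_mean p q lam :
  limsup_gt (fun n => 2^-1 * (p n + q n)) lam -> limsup_gt p lam \/ limsup_gt q lam.
Proof.
move=> [c [lam_c hio]].
have : inf_often (fun n => c <= p n \/ c <= q n).
  apply: inf_often_mono hio => n mean_c; apply/orP; rewrite -le_max.
  have pm : p n <= Num.max (p n) (q n) by rewrite le_max lexx.
  have qm : q n <= Num.max (p n) (q n) by rewrite le_max lexx orbT.
  by apply: le_trans mean_c _; lra.
by case/inf_often_or => h; [left | right]; exists c.
Qed.

Lemma limsup_gt0_mean p q : (forall n, 0 <= p n) -> (forall n, 0 <= q n) ->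
  limsup_gt p 0 \/ limsup_gt q 0 -> limsup_gt (fun n => 2^-1 * (p n + q n)) 0.
Proof.
move=> p0 q0 [] [c [c0 hio]]; exists (2^-1 * c); (split; first by lra);
  by apply: inf_often_mono hio => n; have := p0 n; have := q0 n; lra.
Qed.

Lemma limsup_gt_pow q lam k : 0 <= lam < 1 -> (forall n, 0 <= q n) ->
  limsup_gt (fun n => q n ^+ k) (lam ^+ k) -> limsup_gt q lam.
Proof.
move=> hlam q0 [c [lam_c hio]]; have lam0 : 0 <= lam by case/andP: hlam.
have dl0 : 0 < c - lam ^+ k by rewrite subr_gt0.
have [y [lam_y yk]] := exprn_right_cont k hlam dl0.
exists y; split => //; apply: inf_often_mono hio => n c_qk.
rewrite leNgt; apply/negP => qy.
have : q n ^+ k <= y ^+ k by apply: lerXn2r; rewrite ?nnegrE ?(ltW qy) // ltW // (le_lt_trans lam0).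
lra.
Qed.

Lemma limsup_gt_pow_mean p q lam : 0 < lam -> (forall n, 0 <= p n) -> (forall n, 0 <= q n) ->
  limsup_gt p lam \/ limsup_gt q lam ->
  eventually (fun k => limsup_gt (fun n => 2^-1 * (p n ^+ k + q n ^+ k)) (lam ^+ k)).
Proof.
move=> lam0 p0 q0.
suff main p' q' : (forall n, 0 <= q' n) -> limsup_gt p' lam ->
    eventually (fun k => limsup_gt (fun n => 2^-1 * (p' n ^+ k + q' n ^+ k)) (lam ^+ k)).
  case=> [/(main _ _ q0) //|/(main _ _ p0) [K hK]]; exists K => k /hK.
  by under eq_fun do rewrite addrC.
move=> {}q0 [c [lam_c hio]].
have r1 : 1 < c / lam by rewrite ltr_pdivlMr // mul1r.
have [K hK] := exprn_gt_eventually 2 r1.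
exists K => k /hK; rewrite expr_div_n ltr_pdivlMr ?exprn_gt0 // => big_ck.
exists (2^-1 * c ^+ k); split; first by lra.
have c0 : 0 <= c by apply/ltW/(lt_trans lam0 lam_c).
apply: inf_often_mono hio => n c_pn.
have : c ^+ k <= p' n ^+ k by apply: lerXn2r; rewrite ?nnegrE // (le_trans c0 c_pn).
by have := exprn_ge0 k (q0 n); lra.
Qed.

End LimsupGt.

Section Union.
Variables (R : realType) (Sigma : finType).

Lemma half01 : 0 <= (2^-1 : R) <= 1.
Proof. by apply/andP; split; lra. Qed.

Lemma mq_mass_mean (M1 M2 : maskQA R Sigma) w :
  mq_mass (mq_mix half01 M1 M2) w = fun n => 2^-1 * (mq_mass M1 w n + mq_mass M2 w n).
Proof. by apply/funext => n; rewrite mq_mass_mix; field. Qed.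

Lemma QBA_ND0_setU (L1 L2 : set (nat -> Sigma)) :
  QBA_ND (0 : R) L1 -> QBA_ND (0 : R) L2 -> QBA_ND (0 : R) (L1 `|` L2).
Proof.
move=> /(QBA_ND_mqP (lexx 0)) [M1 ->] /(QBA_ND_mqP (lexx 0)) [M2 ->].
suff -> : [set w | limsup_gt (mq_mass M1 w) 0] `|` [set w | limsup_gt (mq_mass M2 w) 0] =
    [set w | limsup_gt (mq_mass (mq_mix half01 M1 M2) w) 0] by apply: QBA_ND_mq.
apply/seteqP; split => w /=; rewrite mq_mass_mean.
  by apply: limsup_gt0_mean => n; apply: mq_mass_ge0.
exact: limsup_gt_mean.
Qed.

Lemma QBA_ND_setU_limit (lam : R) : 0 < lam < 1 ->
  forall L1 L2 : set (nat -> Sigma), QBA_ND lam L1 -> QBA_ND lam L2 ->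
  exists Ls : nat -> set (nat -> Sigma),
    (forall k, QBA_ND lam (Ls k)) /\ set_lim_is Ls (L1 `|` L2).
Proof.
move=> /andP[lam0 lam1] L1 L2; have lam0' := ltW lam0.
move=> /(QBA_ND_mqP lam0') [M1 ->] /(QBA_ND_mqP lam0') [M2 ->].
pose gam k : R := (1 - lam) / (1 - lam ^+ k.+1).
have lamXk k : 0 <= lam ^+ k.+1 /\ lam ^+ k.+1 <= lam.
  by split; [apply: exprn_ge0 | rewrite exprS ler_piMr // exprn_ile1 // ltW].
have gam_pos k : 0 < gam k by have [? ?] := lamXk k; rewrite /gam divr_gt0 //; lra.
have gam01 k : 0 <= gam k <= 1.
  apply/andP; split; first exact: ltW.
  by have [? ?] := lamXk k; rewrite /gam ler_pdivrMr; lra.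
have lam_gam k : gam k * lam ^+ k.+1 + (1 - gam k) = lam.
  by have [? ?] := lamXk k; rewrite /gam; field; lra.
(* Mixing in the always-accepting [mq_one] with weight [1 - gam k] moves the
   threshold [lam ^+ k.+1] of the tensor powers to [lam]. *)
pose B k := mq_mix (gam01 k) (mq_mix half01 (mq_pow M1 k.+1) (mq_pow M2 k.+1)) (mq_one R Sigma).
pose pow_mean k w n := 2^-1 * (mq_mass M1 w n ^+ k + mq_mass M2 w n ^+ k).
have B_lang k w : limsup_gt (mq_mass (B k) w) lam <-> limsup_gt (pow_mean k.+1 w) (lam ^+ k.+1).
  rewrite -(limsup_gt_affine (pow_mean k.+1 w) (1 - gam k) _ (gam_pos k)) lam_gam.
  suff -> : mq_mass (B k) w = fun n => gam k * pow_mean k.+1 w n + (1 - gam k) by [].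
  by apply/funext => n; rewrite mq_mass_mix mq_mass_mean !mq_mass_pow mq_mass_one mulr1.
exists (fun k => [set w | limsup_gt (mq_mass (B k) w) lam]).
split => [k|]; first exact: QBA_ND_mq.
have p0 w n : 0 <= mq_mass M1 w n by apply: mq_mass_ge0.
have q0 w n : 0 <= mq_mass M2 w n by apply: mq_mass_ge0.
apply: set_lim_is_eventually => w.
  move=> /(limsup_gt_pow_mean lam0 (p0 w) (q0 w)) [K hK].
  by exists K => k /leqW /hK /B_lang.
move=> not_union; exists 0%N => k _ /B_lang /limsup_gt_mean.
by case=> /limsup_gt_pow h; apply: not_union; [left | right]; apply: h; rewrite ?lam0' ?lam1.
Qed.

End Union.

Theorem theorem10 (R : realType) :
  (* (1) *)
  (forall (Sigma : finType) (L1 L2 : set (nat -> Sigma)),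
     QBA_ND (0 : R) L1 -> QBA_ND (0 : R) L2 -> QBA_ND (0 : R) (L1 `|` L2)) /\
  (* (2) *)
  (forall lambda : R, 0 < lambda < 1 ->
   forall (Sigma : finType) (L1 L2 : set (nat -> Sigma)),
     QBA_ND lambda L1 -> QBA_ND lambda L2 ->
     exists Ls : nat -> set (nat -> Sigma),
       (forall k, QBA_ND lambda (Ls k)) /\ set_lim_is Ls (L1 `|` L2)) /\
  (* (3) *)
  (forall lambda : R, 0 < lambda < 1 ->
   exists (Sigma : finType) (Ls : nat -> set (nat -> Sigma)) (L : set (nat -> Sigma)),
     (forall k, QBA_ND lambda (Ls k)) /\ set_lim_is Ls L /\ ~ QBA_ND lambda L) /\
  (* (4) *)
  (forall lambda : R, 0 <= lambda < 1 ->
   exists (Sigma : finType) (L : set (nat -> Sigma)),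
     QBA_ND lambda L /\ ~ QBA_ND lambda (~` L)) /\
  (* (5) *)
  (forall lambda : R, 0 <= lambda < 1 ->
   exists (Sigma : finType) (L1 L2 : set (nat -> Sigma)),
     QBA_ND lambda L1 /\ QBA_ND lambda L2 /\ ~ QBA_ND lambda (L1 `&` L2)).
Proof.
split; first exact: QBA_ND0_setU.
split; first by move=> lam hlam Sigma; apply: QBA_ND_setU_limit.
split; first by move=> lam /andP[lam0 lam1]; apply: QBA_ND_not_limit_closed; rewrite ltW.
split; first exact: QBA_ND_not_setC_closed.
exact: QBA_ND_not_setI_closed.
Qed.
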